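(* Consider a sequence of designs indexed by $n$ as in the context, and let $\hat\mu_n\in\mathbb{R}^k$ be a moment-type estimator, i.e. there are fixed integers $l_1\ge 1$, $l_2\ge 0$ and, for each $n$, nonrandom vectors $\phi^1,\dots,\phi^{l_1+l_2}\in\mathbb{R}^{kn}$ and a known map $F=F_n:\mathbb{R}^{l_1+l_2}\to\mathbb{R}^k$ such that: (i) $\hat\mu_n=F(\hat m_n^1,\dots,\hat m_n^{l_1},m_n^{l_1+1},\dots,m_n^{l_1+l_2})$, where $\hat m_n^s=\frac1n 1_{kn}'\pi^{-1}\mathbf{R}\phi^s$ for $s\le l_1$ and $m_n^s=\frac1n 1_{kn}'\phi^s$ for all $s$; (ii) (uniform local Lipschitz property) there exist $N$, $C>0$, $\epsilon>0$ such that for all $n\ge N$ and all $(\tilde m^1,\dots,\tilde m^{l_1})$ with $\sum_{s=1}^{l_1}(\tilde m^s-m_n^s)^2<\epsilon$, $\|F(\tilde m^1,\dots,\tilde m^{l_1},m_n^{l_1+1},\dots,m_n^{l_1+l_2})-F(m_n^1,\dots,m_n^{l_1+l_2})\|_2\le C\sqrt{\sum_{s=1}^{l_1}(\tilde m^s-m_n^s)^2}$; (iii) there is $C'$ with $\frac1n\|\phi^s\|_2^2\le C'$ for all $s$ and all $n$. Let $\mu_n:=F(m_n^1,\dots,m_n^{l_1+l_2})$. If $|||\mathbf{D}|||_2/n\to 0$, then $$\hat\mu_n-\mu_n=O_p\Big(\sqrt{|||\mathbf{D}|||_2/n}\Big).$$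
   Context: Setup: there are $k$ treatment arms and $n$ units; $k$ is fixed while $n\to\infty$ along a sequence of finite populations, each with its own randomized design. All probabilities, expectations, variances, $O_p$ and $o_p$ refer only to the randomness of the treatment assignment (potential outcomes, covariates and all vectors called nonrandom are fixed). For unit $i$ and arm $a$, $\mathbf{R}_{ai}\in\{0,1\}$ indicates that unit $i$ is assigned to arm $a$; each unit is assigned to exactly one arm. $\mathbf{R}$ denotes the $kn\times kn$ diagonal matrix with diagonal $(\mathbf{R}_{11},\dots,\mathbf{R}_{1n},\mathbf{R}_{21},\dots,\mathbf{R}_{kn})$, and $\pi=\mathrm{E}[\mathbf{R}]$ is the diagonal matrix of assignment probabilities $\pi_{ai}$, assumed to lie in $(0,1)$. $1_{kn}$ is the all-ones vector in $\mathbb{R}^{kn}$. The first-order design matrix is $\mathbf{D}=\mathrm{Var}(\pi^{-1}\mathbf{R}1_{kn})\in\mathbb{R}^{kn\times kn}$, the covariance matrix of the vector with entries $\mathbf{R}_{ai}/\pi_{ai}$. $|||A|||_2$ denotes the spectral norm (largest singular value, equal to the largest eigenvalue for positive semidefinite $A$). *)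

From HB Require Import structures.
From mathcomp Require Import all_boot all_order all_algebra.
From mathcomp Require Import boolp classical_sets reals topology normedtype sequences.
Set Implicit Arguments. Unset Strict Implicit. Unset Printing Implicit Defensive.
Import Order.TTheory GRing.Theory Num.Theory.
Local Open Scope ring_scope.

Section Design.
Variables (R : realType) (k n : nat).

(* An assignment: each unit i : 'I_n goes to exactly one arm z i : 'I_k. *)
Definition asg := {ffun 'I_n -> 'I_k}.

Definition is_design (P : asg -> R) : Prop :=
  (forall z, 0 <= P z) /\ \sum_(z : asg) P z = 1.

Definition Rind (a : 'I_k) (i : 'I_n) (z : asg) : R := (z i == a)%:R.
Definition Ex (P : asg -> R) (f : asg -> R) : R := \sum_(z : asg) P z * f z.
Definition Pr (P : asg -> R) (A : pred asg) : R := \sum_(z : asg | A z) P z.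

Definition aprob (P : asg -> R) (a : 'I_k) (i : 'I_n) : R := Ex P (Rind a i).

(* entry R_{ai}/pi_{ai} of pi^{-1} R 1_{kn}; index (a,i) of R^{kn} *)
Definition Rw (P : asg -> R) (p : 'I_k * 'I_n) (z : asg) : R :=
  Rind p.1 p.2 z / aprob P p.1 p.2.

(* D = Var(pi^{-1} R 1_{kn}) : covariance matrix *)
Definition Dmat (P : asg -> R) (p q : 'I_k * 'I_n) : R :=
  Ex P (fun z => Rw P p z * Rw P q z) - Ex P (Rw P p) * Ex P (Rw P q).

Definition mhat (P : asg -> R) (phi : 'I_k * 'I_n -> R) (z : asg) : R :=
  n%:R^-1 * \sum_(p : 'I_k * 'I_n) Rw P p z * phi p.
Definition mbar (phi : 'I_k * 'I_n -> R) : R :=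
  n%:R^-1 * \sum_(p : 'I_k * 'I_n) phi p.
End Design.

Definition vnorm (R : realType) (T : finType) (x : T -> R) : R :=
  Num.sqrt (\sum_(t : T) x t ^+ 2).
Definition rnorm (R : realType) (m : nat) (v : 'rV[R]_m) : R :=
  vnorm (fun j : 'I_m => v 0 j).

Definition specnorm (R : realType) (T : finType) (A : T -> T -> R) : R :=
  sup [set vnorm (fun t => \sum_(u : T) A t u * x u) | x in
       [set x : T -> R | vnorm x <= 1]].

Section Estimator.
Variables (R : realType) (k l1 l2 n : nat).
Variable (P : asg k n -> R).
Variable (phi : 'I_(l1 + l2) -> 'I_k * 'I_n -> R).

Definition mvec : 'rV[R]_(l1 + l2) := \row_s mbar (phi s).
Definition mhatvec (z : asg k n) : 'rV[R]_(l1 + l2) :=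
  \row_s (if (s < l1)%N then mhat P (phi s) z else mbar (phi s)).
End Estimator.

Definition bigOp (R : realType) (k : nat) (P : forall n, asg k n -> R)
  (X : forall n, asg k n -> R) (a : nat -> R) : Prop :=
  forall eps : R, 0 < eps -> exists M : R, exists N : nat,
    forall n, (N <= n)%N -> Pr (P n) (fun z => M * a n < X n z) < eps.

From HB Require Import structures.
From mathcomp Require Import all_boot all_order all_algebra.
From mathcomp Require Import boolp classical_sets reals topology normedtype sequences.
From mathcomp Require Import ring lra.
Set Implicit Arguments. Unset Strict Implicit. Unset Printing Implicit Defensive.
Import Order.TTheory GRing.Theory Num.Theory.
Import numFieldNormedType.Exports.
Local Open Scope classical_set_scope.
Local Open Scope ring_scope.

(* Each deviation hat m^s - m^s is the centred linear form (1/n) phi' (pi^-1 R 1 - 1),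
   so its second moment is the quadratic form phi' D phi / n^2 <= |||D|||_2/n * C'.
   Markov's inequality applied to the sum Y of these squared deviations then shows
   that Y <= (M/C)^2 |||D|||_2/n outside an event of probability O(1/M^2); since
   |||D|||_2/n -> 0 this eventually places the moments in the Lipschitz ball of F,
   where |hat mu - mu| <= C sqrt Y <= M sqrt(|||D|||_2/n). *)

Section VectorNorm.
Variables (R : realType) (T : finType).

Lemma sqr_sum_mul_le (a b : T -> R) :
  (\sum_t a t * b t) ^+ 2 <= (\sum_t a t ^+ 2) * (\sum_t b t ^+ 2).
Proof.
have prod_sum : \sum_i \sum_j (a i * b j) ^+ 2 =
    (\sum_t a t ^+ 2) * (\sum_t b t ^+ 2).
  rewrite mulr_suml; apply: eq_bigr => i _; rewrite mulr_sumr.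
  by apply: eq_bigr => j _; rewrite exprMn.
have prod_sum_swap : \sum_i \sum_j (a j * b i) ^+ 2 =
    (\sum_t a t ^+ 2) * (\sum_t b t ^+ 2).
  rewrite exchange_big /= mulr_suml; apply: eq_bigr => i _; rewrite mulr_sumr.
  by apply: eq_bigr => j _; rewrite exprMn.
have sqr_sum : \sum_i \sum_j (a i * b j) * (a j * b i) = (\sum_t a t * b t) ^+ 2.
  rewrite expr2 mulr_suml; apply: eq_bigr => i _; rewrite mulr_sumr.
  by apply: eq_bigr => j _; ring.
have lagrange : \sum_i \sum_j (a i * b j - a j * b i) ^+ 2 =
    \sum_i \sum_j (a i * b j) ^+ 2 + \sum_i \sum_j (a j * b i) ^+ 2
    - 2 * \sum_i \sum_j (a i * b j) * (a j * b i).
  rewrite mulr_sumr -big_split -sumrB /=; apply: eq_bigr => i _.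
  rewrite mulr_sumr -big_split -sumrB /=; apply: eq_bigr => j _.
  by ring.
have : 0 <= \sum_i \sum_j (a i * b j - a j * b i) ^+ 2.
  by apply: sumr_ge0 => i _; apply: sumr_ge0 => j _; apply: sqr_ge0.
rewrite lagrange prod_sum prod_sum_swap sqr_sum; lra.
Qed.

Lemma sum_mul_le_vnorm (a b : T -> R) : \sum_t a t * b t <= vnorm a * vnorm b.
Proof.
apply: le_trans (ler_norm _) _.
rewrite -sqrtr_sqr /vnorm -sqrtrM; last by apply: sumr_ge0 => t _; apply: sqr_ge0.
by rewrite ler_sqrt ?sqr_sum_mul_le // mulr_ge0 // sumr_ge0 // => t _; apply: sqr_ge0.
Qed.

Lemma vnormZ (c : R) (x : T -> R) : vnorm (fun t => c * x t) = `|c| * vnorm x.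
Proof.
rewrite /vnorm -sqrtr_sqr -sqrtrM ?sqr_ge0 // mulr_sumr.
by congr Num.sqrt; apply: eq_bigr => t _; rewrite exprMn.
Qed.

Lemma vnorm_eq0 (x : T -> R) : vnorm x = 0 -> forall t, x t = 0.
Proof.
move=> /eqP; rewrite sqrtr_eq0 => x0 t; apply/eqP; rewrite -sqrf_eq0; apply/eqP.
have x2_ge0 u : 0 <= x u ^+ 2 := sqr_ge0 (x u).
apply: (@psumr_eq0P _ _ xpredT (fun u => x u ^+ 2)) => //.
by apply/le_anti; rewrite x0 sumr_ge0.
Qed.

Lemma vnorm_le1_coord (x : T -> R) t : vnorm x <= 1 -> `|x t| <= 1.
Proof.
rewrite /vnorm -{1}sqrtr1 ler_sqrt // => sum_le1.
rewrite -(@ler_pXn2r _ 2) ?nnegrE // expr1n real_normK ?num_real //.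
apply: le_trans sum_le1; rewrite (bigD1 t) //= lerDl.
by apply: sumr_ge0 => u _; apply: sqr_ge0.
Qed.

Variable A : T -> T -> R.

Lemma vnorm_mul_le_specnorm (x : T -> R) :
  vnorm x <= 1 -> vnorm (fun t => \sum_u A t u * x u) <= specnorm A.
Proof.
move=> x_le1; apply: ub_le_sup; last by exists x.
exists (Num.sqrt (\sum_t (\sum_u `|A t u|) ^+ 2)) => _ [y y_le1 <-].
rewrite /vnorm ler_sqrt; last by apply: sumr_ge0 => t _; apply: sqr_ge0.
apply: ler_sum => t _; rewrite -[_ ^+ 2]real_normK ?num_real //.
rewrite -[X in _ <= X]real_normK ?num_real // ler_sqr ?nnegrE //.
apply: le_trans (ler_norm_sum _ _ _) (le_trans _ (ler_norm _)).
apply: ler_sum => u _; rewrite normrM; apply: ler_piMr => //.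
exact: vnorm_le1_coord.
Qed.

Lemma specnorm_ge0 : 0 <= specnorm A.
Proof.
apply: le_trans (@vnorm_mul_le_specnorm (fun _ => 0) _); first exact: sqrtr_ge0.
by rewrite /vnorm big1 ?sqrtr0 // => t _; rewrite expr0n.
Qed.

Lemma vnorm_mul_le (x : T -> R) :
  vnorm (fun t => \sum_u A t u * x u) <= specnorm A * vnorm x.
Proof.
have [x0|xn0] := eqVneq (vnorm x) 0.
  rewrite x0 mulr0 /vnorm big1 ?sqrtr0 // => t _.
  by rewrite big1 ?expr0n // => u _; rewrite (vnorm_eq0 x0 u) mulr0.
have xpos : 0 < vnorm x by rewrite lt_def xn0 sqrtr_ge0.
pose y t := (vnorm x)^-1 * x t.
have y1 : vnorm y = 1 by rewrite vnormZ ger0_norm ?invr_ge0 ?sqrtr_ge0 // mulVf.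
have -> : (fun t => \sum_u A t u * x u) =
          (fun t => vnorm x * \sum_u A t u * y u).
  apply: funext => t; rewrite mulr_sumr; apply: eq_bigr => u _.
  by rewrite /y; field.
rewrite vnormZ ger0_norm ?sqrtr_ge0 // mulrC ler_pM2r //.
by apply: vnorm_mul_le_specnorm; rewrite y1.
Qed.

Lemma quadform_le_specnorm (x : T -> R) :
  \sum_t x t * (\sum_u A t u * x u) <= specnorm A * \sum_t x t ^+ 2.
Proof.
apply: le_trans (sum_mul_le_vnorm _ _) _.
rewrite -[X in _ <= _ * X]sqr_sqrtr; last by apply: sumr_ge0 => t _; apply: sqr_ge0.
rewrite -/(vnorm x) expr2 mulrCA ler_wpM2l ?sqrtr_ge0 //; exact: vnorm_mul_le.
Qed.

End VectorNorm.

Section Moments.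
Variables (R : realType) (k n : nat) (P : asg k n -> R).
Hypothesis P_design : is_design P.

Lemma Ex_sum (I : finType) (Q : pred I) (g : I -> asg k n -> R) :
  Ex P (fun z => \sum_(s | Q s) g s z) = \sum_(s | Q s) Ex P (g s).
Proof.
rewrite /Ex; under eq_bigr => z _ do rewrite mulr_sumr.
exact: exchange_big.
Qed.

Lemma Pr_subset (E E' : pred (asg k n)) :
  (forall z, E z -> E' z) -> Pr P E <= Pr P E'.
Proof.
move=> EE'; rewrite /Pr [X in X <= _]big_mkcond [X in _ <= X]big_mkcond /=.
apply: ler_sum => z _; case Ez: (E z); first by rewrite EE'.
by case: (E' z) => //; case: P_design.
Qed.

Lemma markov (f : asg k n -> R) (c K : R) :
  (forall z, 0 <= f z) -> 0 <= c -> 0 <= K ->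
  Ex P f <= K * c -> Pr P (fun z => c < f z) <= K.
Proof.
case: P_design => P_ge0 _ f_ge0 c_ge0 K_ge0 Ef_le.
have Pf_ge0 z : 0 <= P z * f z by apply: mulr_ge0.
have Pr_mul_le : Pr P (fun z => c < f z) * c <= Ex P f.
  rewrite /Ex (bigID (fun z => c < f z)) /= /Pr mulr_suml.
  apply: ler_wpDr; first exact: sumr_ge0.
  by apply: ler_sum => z fz; rewrite ler_wpM2l // ltW.
have [c_gt0|] := ltP 0 c; first by rewrite -(ler_pM2r c_gt0) (le_trans Pr_mul_le).
move=> c_le0; have c0 : c = 0 by apply/le_anti; rewrite c_le0.
move: Ef_le; rewrite c0 mulr0 => Ef_le0.
have Pf0 z : P z * f z = 0.
  apply: (@psumr_eq0P _ _ xpredT (fun z => P z * f z)) => //.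
  by apply/le_anti; rewrite Ef_le0 sumr_ge0.
rewrite /Pr big1 // => z fz.
by move/eqP: (Pf0 z); rewrite mulf_eq0 (gt_eqF fz) orbF => /eqP.
Qed.

Hypothesis aprob_gt0 : forall a i, 0 < aprob P a i.

Lemma Ex_Rw p : Ex P (Rw P p) = 1.
Proof.
rewrite /Ex /Rw; under eq_bigr => z _ do rewrite mulrA.
by rewrite -mulr_suml divff // gt_eqF // (aprob_gt0 p.1 p.2).
Qed.

Lemma mhat_sub_mbar (phi : 'I_k * 'I_n -> R) z :
  mhat P phi z - mbar phi = n%:R^-1 * \sum_p (Rw P p z - 1) * phi p.
Proof.
rewrite /mhat /mbar -mulrBr -sumrB; congr (_ * _).
by apply: eq_bigr => p _; ring.
Qed.

Lemma Ex_centered_Rw_mul p q :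
  Ex P (fun z => (Rw P p z - 1) * (Rw P q z - 1)) = Dmat P p q.
Proof.
have expand z : P z * ((Rw P p z - 1) * (Rw P q z - 1)) =
    P z * (Rw P p z * Rw P q z) - P z * Rw P p z - P z * Rw P q z + P z.
  by ring.
rewrite /Dmat !Ex_Rw mulr1 /Ex; under eq_bigr => z _ do rewrite expand.
rewrite big_split /= !sumrB.
have := Ex_Rw p; have := Ex_Rw q; rewrite /Ex => -> ->.
by case: P_design => _ ->; ring.
Qed.

Lemma Ex_sqr_mhat_sub_mbar (phi : 'I_k * 'I_n -> R) :
  Ex P (fun z => (mhat P phi z - mbar phi) ^+ 2) =
  n%:R^-1 ^+ 2 * \sum_p phi p * (\sum_q Dmat P p q * phi q).
Proof.
rewrite /Ex; transitivity (n%:R^-1 ^+ 2 * \sum_z \sum_p \sum_q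
   P z * ((Rw P p z - 1) * phi p) * ((Rw P q z - 1) * phi q)).
  rewrite mulr_sumr; apply: eq_bigr => z _.
  rewrite mhat_sub_mbar exprMn expr2 mulrCA; congr (_ * _).
  rewrite [X in P z * X]mulr_suml mulr_sumr; apply: eq_bigr => p _.
  by rewrite !mulr_sumr; apply: eq_bigr => q _; ring.
congr (_ * _); rewrite exchange_big /=; apply: eq_bigr => p _.
rewrite exchange_big /= mulr_sumr; apply: eq_bigr => q _.
by rewrite -Ex_centered_Rw_mul /Ex mulr_suml mulr_sumr; apply: eq_bigr => z _; ring.
Qed.

Lemma Ex_sqr_mhat_sub_mbar_le (phi : 'I_k * 'I_n -> R) :
  Ex P (fun z => (mhat P phi z - mbar phi) ^+ 2) <=
  specnorm (Dmat P) / n%:R * (n%:R^-1 * \sum_p phi p ^+ 2).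
Proof.
rewrite Ex_sqr_mhat_sub_mbar.
have -> : specnorm (Dmat P) / n%:R * (n%:R^-1 * \sum_p phi p ^+ 2) =
          n%:R^-1 ^+ 2 * (specnorm (Dmat P) * \sum_p phi p ^+ 2) by ring.
by rewrite ler_wpM2l ?exprn_ge0 ?invr_ge0 ?ler0n ?quadform_le_specnorm.
Qed.

End Moments.

Section StochasticOrder.
Variables (R : realType) (k : nat).

Lemma Pr_gt_mul_sqrt_le (n : nat) (P : asg k n -> R) (X Y : asg k n -> R)
    (a C K eps M : R) :
  is_design P -> 0 < C -> 0 < M -> 0 <= a -> 0 <= K ->
  (forall z, 0 <= Y z) ->
  (forall z, Y z < eps -> X z <= C * Num.sqrt (Y z)) ->
  M ^+ 2 / C ^+ 2 * a < eps -> Ex P Y <= K * a ->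
  Pr P (fun z => M * Num.sqrt a < X z) <= K * C ^+ 2 / M ^+ 2.
Proof.
move=> P_design C_gt0 M_gt0 a_ge0 K_ge0 Y_ge0 X_le thr_lt EY_le.
have C2_gt0 : 0 < C ^+ 2 := exprn_gt0 2 C_gt0.
have M2_gt0 : 0 < M ^+ 2 := exprn_gt0 2 M_gt0.
set c := M ^+ 2 / C ^+ 2 * a.
have c_ge0 : 0 <= c by rewrite mulr_ge0 // divr_ge0 ?sqr_ge0.
have K'_ge0 : 0 <= K * C ^+ 2 / M ^+ 2 := divr_ge0 (mulr_ge0 K_ge0 (sqr_ge0 C)) (sqr_ge0 M).
have K'c : K * C ^+ 2 / M ^+ 2 * c = K * a.
  by rewrite /c; field; rewrite !gt_eqF.
apply: le_trans (markov P_design Y_ge0 c_ge0 K'_ge0 _); last by rewrite K'c.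
apply: Pr_subset => // z /= X_gt.
have [Y_lt|] := ltP (Y z) eps; last exact: lt_le_trans.
have sqrt_lt : M * Num.sqrt a < C * Num.sqrt (Y z) := lt_le_trans X_gt (X_le z Y_lt).
have sqr_lt : M ^+ 2 * a < C ^+ 2 * Y z.
  rewrite -(sqr_sqrtr a_ge0) -(sqr_sqrtr (Y_ge0 z)) -!exprMn ltr_pXn2r //.
    by rewrite nnegrE mulr_ge0 ?sqrtr_ge0 ?ltW.
  by rewrite nnegrE mulr_ge0 ?sqrtr_ge0 ?ltW.
by rewrite /c mulrAC ltr_pdivrMr // [Y z * _]mulrC.
Qed.

Lemma bigOp_sqrt_of_local_bound (P : forall n, asg k n -> R)
    (X Y : forall n, asg k n -> R) (a : nat -> R) (C K eps : R) (N : nat) :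
  (forall n, is_design (P n)) -> 0 < C -> 0 < eps -> 0 <= K ->
  (forall n, 0 <= a n) -> a @ \oo --> (0 : R) ->
  (forall n z, 0 <= Y n z) -> (forall n, Ex (P n) (Y n) <= K * a n) ->
  (forall n z, (N <= n)%N -> Y n z < eps -> X n z <= C * Num.sqrt (Y n z)) ->
  bigOp P X (fun n => Num.sqrt (a n)).
Proof.
move=> P_design C_gt0 eps_gt0 K_ge0 a_ge0 a_cvg0 Y_ge0 EY_le X_le delta delta_gt0.
have C2_gt0 : 0 < C ^+ 2 := exprn_gt0 2 C_gt0.
pose Q := K * C ^+ 2 / delta.
have Q_ge0 : 0 <= Q := divr_ge0 (mulr_ge0 K_ge0 (sqr_ge0 C)) (ltW delta_gt0).
pose M := Num.sqrt Q + 1.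
have M_gt0 : 0 < M by rewrite ltr_wpDl ?sqrtr_ge0.
have M2_gt0 : 0 < M ^+ 2 := exprn_gt0 2 M_gt0.
have K'_lt : K * C ^+ 2 / M ^+ 2 < delta.
  have : Q < M ^+ 2.
    have := sqr_sqrtr Q_ge0; have := sqrtr_ge0 Q; rewrite /M; nra.
  by rewrite ltr_pdivrMr // ltr_pdivrMr // [delta * _]mulrC.
have [N1 _ a_small] := cvgr_lt _ a_cvg0 _ (divr_gt0 (mulr_gt0 eps_gt0 C2_gt0) M2_gt0).
exists M, (maxn N N1) => n; rewrite geq_max => /andP [nN nN1].
apply: le_lt_trans K'_lt.
apply: (Pr_gt_mul_sqrt_le (eps := eps) (P_design n) C_gt0 M_gt0 (a_ge0 n) K_ge0
          (Y_ge0 n) _ _ (EY_le n)).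
- by move=> z; apply: X_le.
- have := a_small n nN1; rewrite /= ltr_pdivlMr // => lt_a.
  by rewrite mulrAC ltr_pdivrMr // mulrC.
Qed.

End StochasticOrder.

Theorem mainTheorem1 (R : realType) (k l1 l2 : nat)
  (P : forall n, asg k n -> R)
  (phi : forall n, 'I_(l1 + l2) -> 'I_k * 'I_n -> R)
  (F : forall n, 'rV[R]_(l1 + l2) -> 'rV[R]_k) :
  (0 < l1)%N ->
  (forall n, is_design (P n)) ->
  (forall n (a : 'I_k) (i : 'I_n), 0 < aprob (P n) a i < 1) ->
  (exists (N : nat) (C eps : R), 0 < C /\ 0 < eps /\
     forall n, (N <= n)%N -> forall v : 'rV[R]_(l1 + l2),
       (forall s : 'I_(l1 + l2), (l1 <= s)%N -> v 0 s = mvec (phi n) 0 s) ->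
       \sum_(s : 'I_(l1 + l2) | (s < l1)%N) (v 0 s - mvec (phi n) 0 s) ^+ 2 < eps ->
       rnorm (F n v - F n (mvec (phi n))) <=
         C * Num.sqrt (\sum_(s : 'I_(l1 + l2) | (s < l1)%N)
                          (v 0 s - mvec (phi n) 0 s) ^+ 2)) ->
  (exists C' : R, forall n (s : 'I_(l1 + l2)),
     n%:R^-1 * \sum_(p : 'I_k * 'I_n) phi n s p ^+ 2 <= C') ->
  (fun n => specnorm (Dmat (P n)) / n%:R) @ \oo --> (0 : R) ->
  bigOp P
    (fun n z => rnorm (F n (@mhatvec R k l1 l2 n (P n) (phi n) z) - F n (mvec (phi n))))
    (fun n => Num.sqrt (specnorm (Dmat (P n)) / n%:R)).
Proof.
move=> l1_gt0 P_design aprob01 [N [C [eps [C_gt0 [eps_gt0 F_lip]]]]] [C' phi_le] D_cvg0.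
have C'_ge0 : 0 <= C'.
  by have := phi_le 0%N (Ordinal (leq_trans l1_gt0 (leq_addr l2 l1))); rewrite invr0 mul0r.
pose Y n z := \sum_(s : 'I_(l1 + l2) | (s < l1)%N)
  (@mhatvec R k l1 l2 n (P n) (phi n) z 0 s - mvec (phi n) 0 s) ^+ 2.
apply: (bigOp_sqrt_of_local_bound (Y := Y) (K := \sum_(s : 'I_(l1 + l2) | (s < l1)%N) C')
          (N := N) P_design C_gt0 eps_gt0 _ _ D_cvg0).
- by rewrite sumr_ge0.
- by move=> n; rewrite divr_ge0 ?specnorm_ge0.
- by move=> n z; rewrite sumr_ge0 // => s _; apply: sqr_ge0.
- move=> n; rewrite Ex_sum mulr_suml; apply: ler_sum => s s_lt.
  under [X in Ex _ X]funext => z do rewrite !mxE s_lt.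
  apply: le_trans (Ex_sqr_mhat_sub_mbar_le (P_design n) _ _) _.
    by move=> a i; case/andP: (aprob01 n a i).
  by rewrite mulrC ler_wpM2r ?divr_ge0 ?specnorm_ge0.
- move=> n z nN Y_lt; apply: F_lip => // s s_ge.
  by rewrite !mxE ltnNge s_ge.
Qed.
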